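(* There is a universal constant $c>0$ such that for infinitely many $k$ there exist collaborative learning problems with $k$ agents, strategy space $\mathbb{R}_+^k$ and well-behaved utility functions whose Price of Stability and Price of Fairness are both at least $c\sqrt{k}$. Moreover, such problems exist in each of the following two settings: (a) a random coverage setting in which every agent's distribution is uniform over a subset of the domain, all subsets having the same size; (b) a linear utility setting ${\bf u}({\boldsymbol\theta})=W{\boldsymbol\theta}$ with $W_{ii}=1$ and $W_{ij}=O(1/\sqrt{k})$ for $j\ne i$.
   Context: A collaborative learning problem has $k$ agents, strategy space $\Theta\subseteq\mathbb{R}_+^k$, non-decreasing utilities $u_i$ and thresholds $\mu_i$, each agent able to meet her threshold alone with some $\vartheta_i$ (i.e. $u_i(\vartheta_i,\mathbf{0}_{-i})\ge\mu_i$, where $(x,{\boldsymbol\theta}_{-i})$ replaces the $i$-th entry by $x$). ${\boldsymbol\theta}$ is feasible if $u_i({\boldsymbol\theta})\ge\mu_i$ for all $i$. A socially optimal solution minimizes $\mathbf{1}^\top{\boldsymbol\theta}$ over feasible ${\boldsymbol\theta}\in\Theta$. A feasible ${\boldsymbol\theta}$ is a stable equilibrium if no $i$ has $\theta_i'<\theta_i$ with $(\theta_i',{\boldsymbol\theta}_{-i})\in\Theta$, $u_i(\theta_i',{\boldsymbol\theta}_{-i})\ge\mu_i$; it is envy-free if no $i,j$ have $\theta_j<\theta_i$, ${\boldsymbol\theta}^{(i,j)}\in\Theta$ and $u_i({\boldsymbol\theta}^{(i,j)})\ge\mu_i$, where ${\boldsymbol\theta}^{(i,j)}$ swaps entries $i,j$.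 Price of Stability $=\min_{{\boldsymbol\theta}\text{ stable eq.}}\mathbf{1}^\top{\boldsymbol\theta}/\mathbf{1}^\top{\boldsymbol\theta}^{\mathrm{opt}}$; Price of Fairness $=\min_{{\boldsymbol\theta}\text{ envy-free}}\mathbf{1}^\top{\boldsymbol\theta}/\mathbf{1}^\top{\boldsymbol\theta}^{\mathrm{opt}}$, with ${\boldsymbol\theta}^{\mathrm{opt}}$ socially optimal. Utilities are well-behaved over a box $\prod_i[0,C_i]\subseteq\Theta$ (here the box $\prod_i[0,\vartheta_i]$) if for each $i$ there are $c_1^i\ge0,c_2^i>0$ with $\partial u_i/\partial\theta_i\ge c_2^i$ and $0\le\partial u_i/\partial\theta_j\le c_1^i$ ($j\ne i$) on the box (one-sided derivatives where needed). Random coverage: finite domain $\mathcal{X}$, agent $i$ has distribution $(q_{ix})_{x\in\mathcal{X}}$; for integers $m_j$, $U_i({\bf m})=1-\frac12\sum_{x}q_{ix}\prod_{j}(1-q_{jx})^{m_j}$; for real ${\boldsymbol\theta}$, $u_i({\boldsymbol\theta})=\mathbb{E}[U_i({\bf m})]$ where the $m_j$ are independent and $m_j=\lfloor\theta_j\rfloor+\mathrm{Bernoulli}(\theta_j-\lfloor\theta_j\rfloor)$. Linear setting: $u_i({\boldsymbol\theta})=\sum_jW_{ij}\theta_j$ with $W\in[0,1]^{k\times k}$. *)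

From HB Require Import structures.
From mathcomp Require Import all_boot all_order all_algebra.
From mathcomp Require Import all_classical all_reals all_analysis.
Set Implicit Arguments. Unset Strict Implicit. Unset Printing Implicit Defensive.
Import Order.TTheory GRing.Theory Num.Theory numFieldNormedType.Exports.
Local Open Scope classical_set_scope.
Local Open Scope ring_scope.

Section CollabLearning.
Variable R : realType.

Definition vec (k : nat) := 'I_k -> R.

Definition upd k (th : vec k) (i : 'I_k) (x : R) : vec k :=
  fun j => if j == i then x else th j.
Definition swapv k (th : vec k) (i j : 'I_k) : vec k :=
  fun l => if l == i then th j else if l == j then th i else th l.

Definition inTheta k (th : vec k) := forall i, 0 <= th i.
Definition cost k (th : vec k) : R := \sum_(i < k) th i.

Section Problem.
Variables (k : nat) (u : 'I_k -> vec k -> R) (mu : 'I_k -> R).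

Definition feasible (th : vec k) := inTheta th /\ forall i, mu i <= u i th.

Definition socially_optimal (th : vec k) :=
  feasible th /\ forall th', feasible th' -> cost th <= cost th'.

Definition stable_eq (th : vec k) :=
  feasible th /\
  ~ (exists i x, x < th i /\ inTheta (upd th i x) /\ mu i <= u i (upd th i x)).

Definition envy_free (th : vec k) :=
  feasible th /\
  ~ (exists i j, th j < th i /\ inTheta (swapv th i j) /\ mu i <= u i (swapv th i j)).

Definition rderiv_is (g : R -> R) (t l : R) :=
  (fun h => (g (t + h) - g t) / h) @ 0^'+ --> l.
Definition lderiv_is (g : R -> R) (t l : R) :=
  (fun h => (g (t + h) - g t) / h) @ 0^'- --> l.

(* well-behaved utilities over the box prod_i [0, C_i]; at every point of the
   box, the partial derivatives are required (as one-sided derivatives, in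
   every direction staying inside the box) to exist and satisfy the bounds *)
Definition well_behaved_on (C : vec k) :=
  forall i, exists c1 c2 : R, 0 <= c1 /\ 0 < c2 /\
    forall th : vec k, (forall l, 0 <= th l <= C l) -> forall j : 'I_k,
      let g := fun t => u i (upd th j t) in
      let ok := fun d => if j == i then c2 <= d else 0 <= d <= c1 in
      (th j < C j -> exists d, rderiv_is g (th j) d /\ ok d) /\
      (0 < th j -> exists d, lderiv_is g (th j) d /\ ok d).

Definition wb_clp :=
  (forall i (th th' : vec k), inTheta th -> (forall j, th j <= th' j) ->
      u i th <= u i th') /\
  exists vt : vec k,
    (forall i, 0 <= vt i /\ mu i <= u i (upd (fun _ => 0) i (vt i))) /\
    well_behaved_on vt.

Definition PoS_at_least (r : R) :=
  exists opt, socially_optimal opt /\ 0 < cost opt /\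
    (exists th, stable_eq th) /\
    forall th, stable_eq th -> r <= cost th / cost opt.

Definition PoF_at_least (r : R) :=
  exists opt, socially_optimal opt /\ 0 < cost opt /\
    (exists th, envy_free th) /\
    forall th, envy_free th -> r <= cost th / cost opt.

End Problem.

Definition U_cov k n (q : 'I_k -> 'I_n -> R) (i : 'I_k) (m : 'I_k -> nat) : R :=
  1 - 2^-1 * \sum_(x < n) q i x * \prod_(j < k) (1 - q j x) ^+ m j.

(* u_i(theta) = E[U_i(m)], m_j = floor theta_j + Bernoulli(frac theta_j),
   independent; the expectation written out as a finite sum over the set S
   of agents whose Bernoulli variable equals 1 *)
Definition u_cov k n (q : 'I_k -> 'I_n -> R) (i : 'I_k) (th : vec k) : R :=
  let fl := fun j => Num.truncn (th j) in
  let fr := fun j => th j - (fl j)%:R in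
  \sum_(S : {set 'I_k})
     (\prod_(j in S) fr j) * (\prod_(j in ~: S) (1 - fr j)) *
     U_cov q i (fun j => (fl j + (j \in S))%N).

Definition unif_dist k n (A : 'I_k -> {set 'I_n}) : 'I_k -> 'I_n -> R :=
  fun i x => if x \in A i then (#|A i|%:R)^-1 else 0.

Definition u_lin k (W : 'M[R]_k) (i : 'I_k) (th : vec k) : R :=
  \sum_(j < k) W i j * th j.

End CollabLearning.

(* The instance is a star of stars: a hub and D = N + 2 branches of D leaves
   each, so k = D^2 + 1.  The hub's threshold holds everywhere; leaf (b, c) is
   served by the hub, whose effort benefits all D^2 leaves, or by the leaves
   of its own branch b.  In both settings feasibility gives, for every leaf,
     L <= theta_hub + sum_c' theta_(b,c') + (D - 1) theta_(b,c),
   while putting L on the hub alone is feasible; hence OPT = L.  A stable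
   equilibrium has theta_hub = 0 and an envy-free profile has theta_hub below
   every leaf, so summing the inequality over a branch gives every branch a
   total of at least L / 2: the cost is at least D L / 2 >= (sqrt k / 4) L.
   For random coverage the hub covers one point shared with each branch and a
   leaf covers the shared point of its branch plus D - 1 private points; the
   inequality comes from linearising the uncovered mass (Bernoulli and
   Weierstrass product inequalities), and the thresholds are chosen so that
   every leaf spending 1 / (2 D) is an equilibrium. *)

From mathcomp Require Import all_boot all_order all_algebra.
From mathcomp Require Import all_classical all_reals all_analysis.
From mathcomp Require Import ring lra zify.
Import Order.TTheory GRing.Theory Num.Theory numFieldNormedType.Exports.
Set Implicit Arguments. Unset Strict Implicit. Unset Printing Implicit Defensive.
Local Open Scope ring_scope.

Lemma bernoulli_ineq (R : realDomainType) (e : R) n : e <= 1 -> 1 - n%:R * e <= (1 - e) ^+ n.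
Proof.
move=> e1; elim: n => [|n IH]; first by rewrite mul0r subr0 expr0.
have := ler_wpM2l (_ : 0 <= 1 - e) IH; rewrite exprS -natr1.
have : 0 <= n%:R * (e * e) by rewrite mulr_ge0 // -expr2 sqr_ge0.
nra.
Qed.

Lemma one_sub_sum_le_prod (R : realDomainType) (I : Type) (r : seq I) (F : I -> R) :
  (forall i, 0 <= F i <= 1) -> 1 - \sum_(i <- r) (1 - F i) <= \prod_(i <- r) F i.
Proof.
move=> F01; elim: r => [|i r IH]; first by rewrite !big_nil subr0.
rewrite !big_cons; have /andP[Fi0 Fi1] := F01 i.
have : 0 <= \sum_(j <- r) (1 - F j) by apply: sumr_ge0 => j _; case/andP: (F01 j); lra.
have : 0 <= \prod_(j <- r) F j by apply: prodr_ge0 => j _; case/andP: (F01 j).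
nra.
Qed.

Lemma exprn_le_prod (R : realDomainType) n (F : 'I_n -> R) y : 0 <= y ->
  (forall i, y <= F i) -> y ^+ n <= \prod_(i < n) F i.
Proof.
move=> y0 yF; rewrite -[n in y ^+ n]card_ord -prodr_const.
by apply: ler_prod => i _; rewrite y0 yF.
Qed.

Lemma bernoulli_expect_prod (R : comNzRingType) k (f : 'I_k -> R) (G : 'I_k -> bool -> R) :
  \sum_(S : {set 'I_k})
     (\prod_(j in S) f j) * (\prod_(j in ~: S) (1 - f j)) * \prod_(j < k) G j (j \in S) =
  \prod_(j < k) (f j * G j true + (1 - f j) * G j false).
Proof.
rewrite bigA_distr; apply: eq_bigr => S _.
rewrite (big_mkcond (mem S)) (big_mkcond (mem (~: S))) -!big_split /=.
by apply: eq_bigr => j _; rewrite inE; case: (j \in S) => /=; ring.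
Qed.

Lemma big_option (T : Type) (idx : T) (op : Monoid.law idx) (I : finType) (F : option I -> T) :
  \big[op/idx]_(o : option I) F o = op (F None) (\big[op/idx]_(i : I) F (Some i)).
Proof. by rewrite ![index_enum _]unlock [@Finite.enum in LHS]unlock /= big_cons big_map. Qed.

Section Game.
Variables (R : realType) (k : nat) (u : 'I_k -> vec R k -> R) (mu : 'I_k -> R).

Lemma inTheta_upd (th : vec R k) i x : inTheta th -> 0 <= x -> inTheta (upd th i x).
Proof. by move=> th0 x0 l; rewrite /upd; case: ifP. Qed.

Lemma inTheta_swapv (th : vec R k) i j : inTheta th -> inTheta (swapv th i j).
Proof. by move=> th0 l; rewrite /swapv; case: ifP => _; last case: ifP. Qed.

Variable i0 : 'I_k.
Hypothesis always_satisfied : forall th, inTheta th -> mu i0 <= u i0 th.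

Lemma stable_eq_satisfied0 th : stable_eq u mu th -> th i0 = 0.
Proof.
move=> [[th0 _] no_dev]; apply/eqP; rewrite eq_le th0 andbT leNgt; apply/negP=> pos.
have th0' := inTheta_upd i0 th0 (lexx 0).
by apply: no_dev; exists i0, 0; split; [|split; [|apply: always_satisfied]].
Qed.

Lemma envy_free_satisfied_le th j : envy_free u mu th -> th i0 <= th j.
Proof.
move=> [[th0 _] no_envy]; rewrite leNgt; apply/negP=> lt.
have th0' := inTheta_swapv i0 j th0.
by apply: no_envy; exists i0, j; split; [|split; [|apply: always_satisfied]].
Qed.

End Game.

Section OneSidedDerivatives.
Variable R : realType.

Lemma rderiv_is_affine (g : R -> R) t d e : 0 < e ->
  (forall h, 0 < h < e -> g (t + h) - g t = d * h) -> rderiv_is g t d.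
Proof.
move=> e0 gd; apply: cvg_near_cst; near=> h.
have h0 : 0 < h by near: h; exact: nbhs_right_gt.
have he : h < e by near: h; exact: nbhs_right_lt.
by rewrite gd ?h0 ?he // mulfK // gt_eqF.
Unshelve. all: by end_near.
Qed.

Lemma lderiv_is_affine (g : R -> R) t d e : 0 < e ->
  (forall h, - e < h < 0 -> g (t + h) - g t = d * h) -> lderiv_is g t d.
Proof.
move=> e0 gd; apply: cvg_near_cst; near=> h.
have h0 : h < 0 by near: h; exact: nbhs_left_lt.
have he : - e < h by near: h; apply: nbhs_left_gt; rewrite oppr_lt0.
by rewrite gd ?h0 ?he // mulfK // lt_eqF.
Unshelve. all: by end_near.
Qed.

Variables (k : nat) (u : 'I_k -> vec R k -> R).

Lemma well_behaved_on_affine (C : vec R k) :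
  (forall i, exists c1 c2 : R, 0 <= c1 /\ 0 < c2 /\
     forall th : vec R k, (forall l, 0 <= th l <= C l) -> forall j, exists d,
       (if j == i then c2 <= d else 0 <= d <= c1) /\
       forall t t', 0 <= t <= C j -> 0 <= t' <= C j ->
         u i (upd th j t') - u i (upd th j t) = d * (t' - t)) ->
  well_behaved_on u C.
Proof.
move=> affine i; have [c1 [c2 [c10 [c20 slope]]]] := affine i.
exists c1, c2; split=> //; split=> // th box j g ok.
have [d [okd gd]] := slope th box j; have /andP[thj0 thjC] := box j.
split=> [lt | gt]; exists d; split=> //.
  apply: (@rderiv_is_affine _ _ _ (C j - th j)); first by rewrite subr_gt0.
  by move=> h /andP[h0 hC]; rewrite /g gd; [ring | apply/andP; split; lra ..].
apply: (@lderiv_is_affine _ _ _ (th j)) => // h /andP[h0 hC].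
by rewrite /g gd; [ring | apply/andP; split; lra ..].
Qed.

End OneSidedDerivatives.

Section PowMean.
Variable R : realType.
Implicit Types a t : R.

(* The expectation of [a ^+ m] for the randomized rounding [m] of [t] used in [u_cov]. *)
Definition pow_mean a t : R :=
  (t - (Num.truncn t)%:R) * a ^+ (Num.truncn t).+1 +
  (1 - (t - (Num.truncn t)%:R)) * a ^+ Num.truncn t.

Lemma pow_mean_small a t : 0 <= t < 1 -> pow_mean a t = 1 - (1 - a) * t.
Proof.
move=> t01; rewrite /pow_mean; have -> : Num.truncn t = 0%N by apply: truncn_def.
by rewrite expr1 expr0; ring.
Qed.

Lemma pow_mean1 t : pow_mean 1 t = 1.
Proof. by rewrite /pow_mean !expr1n; ring. Qed.

Lemma pow_mean_itv a t : 0 <= a <= 1 -> 0 <= t ->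
  a ^+ (Num.truncn t).+1 <= pow_mean a t <= a ^+ Num.truncn t.
Proof.
move=> /andP[a0 a1] t0; have /andP[] := truncn_itv t0; rewrite -natr1.
rewrite /pow_mean; set m := Num.truncn t => mt tm.
have amS : a ^+ m.+1 <= a ^+ m by rewrite exprS ler_piMl ?exprn_ge0 ?exprn_ile1.
apply/andP; split; nra.
Qed.

Lemma pow_mean_ge0 a t : 0 <= a <= 1 -> 0 <= t -> 0 <= pow_mean a t.
Proof.
move=> a01 t0; have /andP[+ _] := pow_mean_itv a01 t0; apply: le_trans.
by rewrite exprn_ge0 //; case/andP: a01.
Qed.

Lemma pow_mean_le1 a t : 0 <= a <= 1 -> 0 <= t -> pow_mean a t <= 1.
Proof.
move=> a01 t0; have /andP[_ /le_trans] := pow_mean_itv a01 t0; apply.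
by case/andP: a01 => a0 a1; rewrite exprn_ile1.
Qed.

Lemma pow_mean_ge a t : 0 <= a <= 1 -> 0 <= t -> 1 - (1 - a) * t <= pow_mean a t.
Proof.
move=> /andP[a0 a1] t0; have /andP[] := truncn_itv t0; rewrite -natr1.
rewrite /pow_mean; set m := Num.truncn t => mt tm.
have bern : 1 - m%:R * (1 - a) <= a ^+ m.
  by have := @bernoulli_ineq _ (1 - a) m; rewrite subKr; apply; lra.
have frac : 0 <= 1 - (t - m%:R) * (1 - a) by nra.
have := ler_wpM2r frac bern.
have : 0 <= m%:R * (t - m%:R) * ((1 - a) * (1 - a)).
  by rewrite !mulr_ge0 // ?ler0n; lra.
rewrite exprS; nra.
Qed.

Lemma pow_mean_antitone a t t' : 0 <= a <= 1 -> 0 <= t -> t <= t' ->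
  pow_mean a t' <= pow_mean a t.
Proof.
move=> a01 t0 tt'; have t'0 : 0 <= t' by lra.
have := le_truncn tt'; rewrite leq_eqVlt => /orP[/eqP mm' | mm'].
  have /andP[a0 a1] := a01; rewrite /pow_mean -mm'.
  have : a ^+ (Num.truncn t).+1 <= a ^+ Num.truncn t.
    by rewrite exprS ler_piMl ?exprn_ge0 ?exprn_ile1.
  nra.
have /andP[_ le_m'] := pow_mean_itv a01 t'0; have /andP[ge_m _] := pow_mean_itv a01 t0.
apply: le_trans le_m' (le_trans _ ge_m).
by case/andP: a01 => a0 a1; rewrite ler_wiXn2l.
Qed.

End PowMean.

Section CoverageUtility.
Variables (R : realType) (k n : nat) (q : 'I_k -> 'I_n -> R).

Lemma u_cov_pow_mean i (th : vec R k) :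
  u_cov q i th = 1 - 2^-1 * \sum_(x < n) q i x * \prod_(j < k) pow_mean (1 - q j x) (th j).
Proof.
rewrite /u_cov /U_cov /=.
set fl := fun j => Num.truncn (th j); set fr := fun j => th j - (fl j)%:R.
set w := fun S : {set 'I_k} => (\prod_(j in S) fr j) * (\prod_(j in ~: S) (1 - fr j)).
pose P := fun (S : {set 'I_k}) x => \prod_(j < k) (1 - q j x) ^+ (fl j + (j \in S))%N.
have w1 : \sum_(S : {set 'I_k}) w S = 1.
  have e : \prod_(j < k) (fr j * 1 + (1 - fr j) * 1) = 1 by rewrite big1 // => j _; ring.
  rewrite -e -(bernoulli_expect_prod fr (fun _ _ => 1)).
  by apply: eq_bigr => S _; rewrite big1_eq mulr1.
have wP x : \sum_(S : {set 'I_k}) w S * P S x = \prod_(j < k) pow_mean (1 - q j x) (th j).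
  rewrite (bernoulli_expect_prod fr (fun j b => (1 - q j x) ^+ (fl j + b)%N)).
  by apply: eq_bigr => j _; rewrite addn1 addn0.
transitivity (\sum_(S : {set 'I_k}) (w S - 2^-1 * \sum_(x < n) q i x * (w S * P S x))).
  apply: eq_bigr => S _; rewrite mulrBr mulr1 mulrCA mulr_sumr; congr (_ - 2^-1 * _).
  by apply: eq_bigr => x _; rewrite /w /P; ring.
rewrite sumrB w1 -mulr_sumr exchange_big /=; congr (1 - 2^-1 * _).
by apply: eq_bigr => x _; rewrite -mulr_sumr wP.
Qed.

End CoverageUtility.

Section CoverageUtilityProperties.
Variables (R : realType) (k n : nat) (q : 'I_k -> 'I_n -> R).
Hypothesis q_itv : forall j x, 0 <= q j x <= 2^-1.
Hypothesis q_sum1 : forall i, \sum_(x < n) q i x = 1.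

Let q_ge0 j x : 0 <= q j x. Proof. by case/andP: (q_itv j x). Qed.

Let one_minus_q_itv j x : 0 <= 1 - q j x <= 1.
Proof. by have /andP[] := q_itv j x; move=> *; apply/andP; split; lra. Qed.

Lemma u_cov_ge_half i (th : vec R k) : inTheta th -> 2^-1 <= u_cov q i th.
Proof.
move=> th0; rewrite u_cov_pow_mean.
suff : \sum_(x < n) q i x * \prod_(j < k) pow_mean (1 - q j x) (th j) <= 1 by lra.
rewrite -[leRHS](q_sum1 i); apply: ler_sum => x _; rewrite ler_piMr //.
apply: prodr_ile1 => j _.
by rewrite pow_mean_ge0 ?pow_mean_le1 ?one_minus_q_itv.
Qed.

Lemma u_cov_monotone i (th th' : vec R k) : inTheta th -> (forall j, th j <= th' j) ->
  u_cov q i th <= u_cov q i th'.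
Proof.
move=> th0 le_th; rewrite !u_cov_pow_mean lerD2l lerN2 ler_pM2l ?invr_gt0 ?ltr0n //.
apply: ler_sum => x _; apply: ler_wpM2l => //; apply: ler_prod => j _.
have th'0 : 0 <= th' j by apply: le_trans (le_th j).
by rewrite pow_mean_ge0 ?pow_mean_antitone ?one_minus_q_itv.
Qed.

Lemma u_cov_small i (th : vec R k) : (forall j, 0 <= th j < 1) ->
  u_cov q i th = 1 - 2^-1 * \sum_(x < n) q i x * \prod_(j < k) (1 - q j x * th j).
Proof.
move=> th01; rewrite u_cov_pow_mean; congr (1 - 2^-1 * _).
apply: eq_bigr => x _; congr (_ * _); apply: eq_bigr => j _.
by rewrite pow_mean_small //; ring.
Qed.

Definition cov_slope i j (th : vec R k) : R :=
  2^-1 * \sum_(x < n) q i x * q j x * \prod_(l < k | l != j) (1 - q l x * th l).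

Lemma u_cov_upd_affine i j (th : vec R k) t t' : (forall l, 0 <= th l < 1) ->
  0 <= t < 1 -> 0 <= t' < 1 ->
  u_cov q i (upd th j t') - u_cov q i (upd th j t) = cov_slope i j th * (t' - t).
Proof.
move=> th01 t01 t'01.
have upd01 s : 0 <= s < 1 -> forall l, 0 <= upd th j s l < 1.
  by move=> s01 l; rewrite /upd; case: ifP.
have split_j s x : \prod_(l < k) (1 - q l x * upd th j s l) =
    (1 - q j x * s) * \prod_(l < k | l != j) (1 - q l x * th l).
  rewrite (bigD1 j) //= /upd eqxx; congr (_ * _).
  by apply: eq_bigr => l /negPf ->.
rewrite !u_cov_small /cov_slope; [|by apply: upd01 ..].
under eq_bigr => x _ do rewrite split_j.
under [X in _ - (1 - 2^-1 * X)]eq_bigr => x _ do rewrite split_j.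
rewrite -mulrA mulr_suml.
have -> (a b c : R) : 1 - a * b - (1 - a * c) = a * (c - b) by ring.
by congr (_ * _); rewrite -sumrB; apply: eq_bigr => x _; ring.
Qed.

Lemma cov_slope_itv i j (th : vec R k) : (forall l, 0 <= th l < 1) ->
  0 <= cov_slope i j th <= 1 /\
  2^-1 * (2^-1 ^+ k * \sum_(x < n) q i x ^+ 2) <= cov_slope i i th.
Proof.
move=> th01.
have P_itv x l0 : 2^-1 ^+ k <= \prod_(l < k | l != l0) (1 - q l x * th l) <= 1.
  rewrite big_mkcond /=; apply/andP; split.
    have -> : (2^-1 : R) ^+ k = \prod_(l < k) 2^-1 by rewrite prodr_const card_ord.
    apply: ler_prod => l _.
    have /andP[q0 q1] := q_itv l x; have /andP[t0 t1] := th01 l.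
    by case: ifP => _; apply/andP; split; nra.
  apply: prodr_ile1 => l _; have /andP[q0 q1] := q_itv l x; have /andP[t0 t1] := th01 l.
  by case: ifP => _; apply/andP; split; nra.
have pow_ge0 : 0 <= 2^-1 ^+ k :> R by rewrite exprn_ge0.
split; last first.
  rewrite ler_pM2l ?invr_gt0 ?ltr0n // mulr_sumr; apply: ler_sum => x _.
  have /andP[P1 P2] := P_itv x i; have := q_ge0 i x; nra.
rewrite /cov_slope; apply/andP; split.
  rewrite mulr_ge0 ?invr_ge0 ?ler0n // sumr_ge0 // => x _.
  by have /andP[P1 P2] := P_itv x j; rewrite !mulr_ge0 //; lra.
suff : \sum_(x < n) q i x * q j x * \prod_(l < k | l != j) (1 - q l x * th l) <= 1 by lra.
rewrite -[leRHS](q_sum1 i); apply: ler_sum => x _.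
rewrite -mulrA ler_piMr //; have /andP[P1 P2] := P_itv x j; have /andP[q0 q1] := q_itv j x.
nra.
Qed.

Lemma sum_sqr_gt0 i : 0 < \sum_(x < n) q i x ^+ 2.
Proof.
have [x qx0] : exists x, 0 < q i x.
  case: (pickP (fun x => 0 < q i x)) => [x ? | none]; first by exists x.
  have : \sum_(x < n) q i x <= 0 by apply: sumr_le0 => x _; rewrite leNgt none.
  by rewrite q_sum1; lra.
rewrite (bigD1 x) //=; apply: ltr_pwDl; first exact: exprn_gt0.
by apply: sumr_ge0 => y _; exact: sqr_ge0.
Qed.

Lemma u_cov_well_behaved (C : vec R k) : (forall j, 0 <= C j < 1) ->
  well_behaved_on (u_cov q) C.
Proof.
move=> C01; apply: well_behaved_on_affine => i.
exists 1, (2^-1 * (2^-1 ^+ k * \sum_(x < n) q i x ^+ 2)); split=> //; split.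
  by rewrite !mulr_gt0 ?invr_gt0 ?ltr0n ?exprn_gt0 ?sum_sqr_gt0.
move=> th box j; exists (cov_slope i j th).
have th01 l : 0 <= th l < 1.
  by have /andP[] := box l; have /andP[] := C01 l; move=> *; apply/andP; split; lra.
have [slope01 slope_ii] := cov_slope_itv i j th01; split.
  by case: eqP => [->|].
move=> t t' /andP[t0 tC] /andP[t'0 t'C]; apply: u_cov_upd_affine => //.
  by have /andP[_ C1] := C01 j; apply/andP; split; lra.
by have /andP[_ C1] := C01 j; apply/andP; split; lra.
Qed.

End CoverageUtilityProperties.

Section UniformCoverage.
Variables (R : realType) (k n s : nat) (A : 'I_k -> {set 'I_n}).
Hypothesis card_A : forall j, #|A j| = s.
Local Notation q := (unif_dist R A).

Lemma unif_distE j x : q j x = if x \in A j then s%:R^-1 else 0.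
Proof. by rewrite /unif_dist card_A. Qed.

Lemma unif_dist_itv : (1 < s)%N -> forall j x, 0 <= q j x <= 2^-1.
Proof.
move=> s_gt1 j x; rewrite unif_distE; case: ifP => _; rewrite ?lexx ?invr_ge0 //=.
by rewrite ler0n lef_pV2 ?posrE ?ltr0n ?ler_nat //; lia.
Qed.

Lemma unif_dist_sum1 : (0 < s)%N -> forall i, \sum_(x < n) q i x = 1.
Proof.
move=> s_gt0 i; under eq_bigr => x _ do rewrite unif_distE.
by rewrite -big_mkcond sumr_const card_A -(mulr_natr s%:R^-1) mulVf ?pnatr_eq0 -?lt0n.
Qed.

Lemma u_cov_unif i (th : vec R k) : u_cov q i th =
  1 - 2^-1 * (s%:R^-1 * \sum_(x in A i) \prod_(j | x \in A j) pow_mean (1 - s%:R^-1) (th j)).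
Proof.
rewrite u_cov_pow_mean [in RHS]mulr_sumr [in RHS]big_mkcond /=; congr (1 - 2^-1 * _).
apply: eq_bigr => x _; rewrite unif_distE; case: ifP => _; last by rewrite mul0r.
congr (_ * _); rewrite [in RHS]big_mkcond /=; apply: eq_bigr => j _.
by rewrite unif_distE; case: ifP => _; rewrite ?subr0 ?pow_mean1.
Qed.

End UniformCoverage.

Section LinearUtility.
Variables (R : realType) (k : nat) (W : 'M[R]_k).
Hypothesis W_itv : forall i j, 0 <= W i j <= 1.

Lemma u_lin_monotone i (th th' : vec R k) : (forall j, th j <= th' j) ->
  u_lin W i th <= u_lin W i th'.
Proof.
by move=> le_th; apply: ler_sum => j _; rewrite ler_wpM2l //; case/andP: (W_itv i j).
Qed.

Lemma u_lin_upd i j (th : vec R k) t t' :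
  u_lin W i (upd th j t') - u_lin W i (upd th j t) = W i j * (t' - t).
Proof.
rewrite /u_lin -sumrB (bigD1 j) //= big1 ?addr0 => [|l /negPf ne_lj]; rewrite /upd ?eqxx.
  by ring.
by rewrite ne_lj subrr.
Qed.

Lemma u_lin_well_behaved (C : vec R k) : (forall i, 0 < W i i) -> well_behaved_on (u_lin W) C.
Proof.
move=> diag_gt0; apply: well_behaved_on_affine => i.
exists 1, (W i i); do !split=> //; move=> th _ j; exists (W i j); split.
  by case: eqP => [->|_]; [exact: lexx | exact: W_itv].
by move=> t t' _ _; exact: u_lin_upd.
Qed.

End LinearUtility.

Section Star.
Variable N : nat.
Local Notation D := N.+2.

Definition star := #|{: option ('I_D * 'I_D)}|.
Definition hub : 'I_star := enum_rank None.
Definition leaf (b c : 'I_D) : 'I_star := enum_rank (Some (b, c)).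

Lemma star_card : star = (D * D).+1.
Proof. by rewrite /star card_option card_prod card_ord. Qed.

Lemma star_ind (P : 'I_star -> Prop) : P hub -> (forall b c, P (leaf b c)) -> forall i, P i.
Proof.
move=> Phub Pleaf i; rewrite -(enum_valK i).
by case: (enum_val i) => [[b c]|]; [exact: Pleaf | exact: Phub].
Qed.

Lemma big_star (T : Type) (idx : T) (op : Monoid.com_law idx) (F : 'I_star -> T) :
  \big[op/idx]_(i < star) F i =
  op (F hub) (\big[op/idx]_(b < D) \big[op/idx]_(c < D) F (leaf b c)).
Proof.
rewrite (reindex (@enum_rank _)) /=; last exact: onW_bij (enum_rank_bij _).
by rewrite big_option pair_big /=; congr (op _ _); apply: eq_bigr => -[].
Qed.

Lemma leaf_eq b c b' c' : (leaf b c == leaf b' c') = (b == b') && (c == c').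
Proof. by rewrite (inj_eq enum_rank_inj) (inj_eq (@Some_inj _)) xpair_eqE. Qed.

Lemma leaf_hub b c : (leaf b c == hub) = false.
Proof. by rewrite (inj_eq enum_rank_inj). Qed.

Lemma hub_leaf b c : (hub == leaf b c) = false.
Proof. by rewrite eq_sym leaf_hub. Qed.

Variable R : realType.
Local Notation Dr := (D%:R : R).

Definition star_vec (h l : R) : vec R star :=
  fun i => if enum_val i is Some _ then l else h.

Lemma star_vec_hub h l : star_vec h l hub = h.
Proof. by rewrite /star_vec enum_rankK. Qed.

Lemma star_vec_leaf h l b c : star_vec h l (leaf b c) = l.
Proof. by rewrite /star_vec enum_rankK. Qed.

Lemma inTheta_star_vec h l : 0 <= h -> 0 <= l -> inTheta (star_vec h l).
Proof. by move=> h0 l0; apply: star_ind => *; rewrite ?star_vec_hub ?star_vec_leaf. Qed.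

Definition branch (th : vec R star) b := \sum_(c < D) th (leaf b c).

Lemma cost_star (th : vec R star) : cost th = th hub + \sum_(b < D) branch th b.
Proof. exact: big_star. Qed.

Lemma cost_star_vec_hub h : cost (star_vec h 0) = h.
Proof.
rewrite cost_star star_vec_hub big1 ?addr0 // => b _.
by rewrite /branch big1 // => c _; rewrite star_vec_leaf.
Qed.

Lemma leaf_le_branch (th : vec R star) b c : inTheta th -> th (leaf b c) <= branch th b.
Proof.
by move=> th0; rewrite /branch (bigD1 c) //= lerDl sumr_ge0.
Qed.

Lemma sqrt_star_le : Num.sqrt (star%:R : R) <= 2 * Dr.
Proof.
rewrite -[leRHS]ger0_norm ?mulr_ge0 ?ler0n // -sqrtr_sqr ler_sqrt ?sqr_ge0 //.
by rewrite star_card -natrM -natrX ler_nat; lia.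
Qed.

End Star.

Section StarEquilibria.
Variables (R : realType) (N : nat).
Variables (u : 'I_(star N) -> vec R (star N) -> R) (mu : 'I_(star N) -> R) (t : R).
Local Notation hub := (@hub N).
Local Notation star_vec := (@star_vec N R).
Hypothesis feasible_t : feasible u mu (star_vec 0 t).

Lemma star_vec0_stable_eq :
  (forall b c x, 0 <= x < t ->
     u (leaf b c) (upd (star_vec 0 t) (leaf b c) x) < mu (leaf b c)) ->
  stable_eq u mu (star_vec 0 t).
Proof.
move=> leaf_dev; split=> // -[i [x [lt_x [th0 sat]]]]; move: i x lt_x th0 sat.
apply: star_ind => [|b c] x; rewrite ?star_vec_hub ?star_vec_leaf => lt_x th0.
  by have := th0 hub; rewrite /upd eqxx; lra.
have := th0 (leaf b c); rewrite /upd eqxx => x0.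
by rewrite leNgt leaf_dev // x0 lt_x.
Qed.

Lemma star_vec0_envy_free :
  (forall b c, u (leaf b c) (swapv (star_vec 0 t) (leaf b c) hub) < mu (leaf b c)) ->
  envy_free u mu (star_vec 0 t).
Proof.
move=> leaf_swap; split=> // -[i [j [lt_ij [_ sat]]]]; move: i j lt_ij sat.
have [th0 _] := feasible_t.
apply: star_ind => [|b c] j; first by have := th0 j; rewrite star_vec_hub; lra.
move: j; apply: star_ind => [|b' c']; rewrite ?star_vec_hub ?star_vec_leaf.
  by move=> _; rewrite leNgt leaf_swap.
by rewrite ltxx.
Qed.

End StarEquilibria.

Section StarPrices.
Variables (R : realType) (N : nat).
Variables (u : 'I_(star N) -> vec R (star N) -> R) (mu : 'I_(star N) -> R) (L : R).
Local Notation D := N.+2.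
Local Notation Dr := (D%:R : R).
Local Notation hub := (@hub N).
Local Notation star_vec := (@star_vec N R).

Hypothesis hub_satisfied : forall th, inTheta th -> mu hub <= u hub th.
Hypothesis leaf_cut : forall th, feasible u mu th -> forall b c,
  L <= th hub + branch th b + N.+1%:R * th (leaf b c).
Hypothesis L_gt0 : 0 < L.
Hypothesis hub_feasible : feasible u mu (star_vec L 0).

Let Dr_gt0 : 0 < Dr. Proof. by rewrite ltr0n. Qed.
Let DrE : Dr = N.+1%:R + 1. Proof. by rewrite natr1. Qed.
Let sum_const_D (x : R) : \sum_(i < D) x = x * Dr.
Proof. by rewrite sumr_const card_ord mulr_natr. Qed.

Lemma star_cost_ge (th : vec R (star N)) : feasible u mu th -> L <= cost th.
Proof.
move=> feas; have [th0 _] := feas.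
have per_branch b : L <= th hub + Dr * branch th b.
  have := leaf_cut feas b ord0; have := leaf_le_branch b ord0 th0.
  move=> /(ler_wpM2l (ler0n _ N.+1)); rewrite DrE; lra.
have : \sum_(b < D) L <= \sum_(b < D) (th hub + Dr * branch th b).
  by apply: ler_sum => b _; exact: per_branch.
rewrite big_split /= !sum_const_D -mulr_sumr cost_star.
move=> le; rewrite -(ler_pM2r Dr_gt0) mulrDl; lra.
Qed.

Lemma star_optimal : socially_optimal u mu (star_vec L 0).
Proof. by split=> // th feas; rewrite cost_star_vec_hub; exact: star_cost_ge. Qed.

Lemma star_branch_ge (th : vec R (star N)) b : feasible u mu th -> Dr * th hub <= branch th b ->
  L <= 2 * branch th b.
Proof.
move=> feas hub_le; have [th0 _] := feas.
have : \sum_(c < D) L <=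
        \sum_(c < D) (th hub + branch th b + N.+1%:R * th (leaf b c)).
  by apply: ler_sum => c _; exact: leaf_cut.
rewrite !big_split /= !sum_const_D -mulr_sumr -/(branch th b).
move=> le; rewrite -(ler_pM2r Dr_gt0); move: le hub_le; rewrite DrE; lra.
Qed.

Lemma star_cost_ratio (th : vec R (star N)) : inTheta th -> (forall b, L <= 2 * branch th b) ->
  4^-1 * Num.sqrt (star N)%:R <= cost th / cost (star_vec L 0).
Proof.
move=> th0 branch_ge; rewrite cost_star_vec_hub ler_pdivlMr // cost_star.
have : \sum_(b < D) L <= \sum_(b < D) 2 * branch th b.
  by apply: ler_sum => b _; exact: branch_ge.
rewrite sum_const_D -mulr_sumr.
have := ler_wpM2r (ltW L_gt0) (@sqrt_star_le N R); have := th0 hub; nra.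
Qed.

Lemma star_PoS : (exists th, stable_eq u mu th) ->
  PoS_at_least u mu (4^-1 * Num.sqrt (star N)%:R).
Proof.
move=> eq_ex; exists (star_vec L 0); split; first exact: star_optimal.
split; first by rewrite cost_star_vec_hub.
split=> // th stable; have [[th0 _] _] := stable; apply: star_cost_ratio => // b.
apply: star_branch_ge; first by case: stable.
by rewrite (stable_eq_satisfied0 hub_satisfied stable) mulr0 sumr_ge0.
Qed.

Lemma star_PoF : (exists th, envy_free u mu th) ->
  PoF_at_least u mu (4^-1 * Num.sqrt (star N)%:R).
Proof.
move=> ef_ex; exists (star_vec L 0); split; first exact: star_optimal.
split; first by rewrite cost_star_vec_hub.
split=> // th ef; have [[th0 _] _] := ef; apply: star_cost_ratio => // b.
apply: star_branch_ge; first by case: ef.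
rewrite /branch mulrC -sum_const_D; apply: ler_sum => c _.
exact: envy_free_satisfied_le hub_satisfied _ _ ef.
Qed.

End StarPrices.

Section LinearStar.
Variables (R : realType) (N : nat).
Local Notation D := N.+2.
Local Notation Dr := (D%:R : R).
Local Notation hub := (@hub N).
Local Notation star_vec := (@star_vec N R).

Definition star_weights : 'M[R]_(star N) :=
  \matrix_(i, j) if j == i then 1 else if j == hub then Dr^-1 else 0.

Definition star_lin_mu (i : 'I_(star N)) : R := if i == hub then 0 else 1.

Let Dr_gt0 : 0 < Dr. Proof. by rewrite ltr0n. Qed.
Let DrE : Dr = N.+1%:R + 1. Proof. by rewrite natr1. Qed.

Let invDr_itv : 0 <= Dr^-1 <= 1.
Proof. by rewrite invr_ge0 ler0n invf_le1 ?ltr0n ?(ler_nat R 1). Qed.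

Lemma star_weights_itv i j : 0 <= star_weights i j <= 1.
Proof. by rewrite mxE; case: eqP => _; [|case: eqP => _]; rewrite ?ler01 ?lexx. Qed.

Lemma star_weights_diag i : star_weights i i = 1.
Proof. by rewrite mxE eqxx. Qed.

Lemma star_weights_offdiag i j : i != j -> star_weights i j <= Dr^-1.
Proof.
have /andP[? _] := invDr_itv.
by rewrite mxE eq_sym => /negPf ->; case: eqP.
Qed.

Lemma star_weights_offdiag_sqrt i j : i != j ->
  star_weights i j <= 2 / Num.sqrt (star N)%:R.
Proof.
move=> ne_ij; apply: le_trans (star_weights_offdiag ne_ij) _.
have sqrt_gt0 : 0 < Num.sqrt ((star N)%:R : R) by rewrite sqrtr_gt0 ltr0n star_card.
by rewrite ler_pdivlMr // ler_pdivrMl ?ltr0n // mulrC sqrt_star_le.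
Qed.

Local Notation u := (u_lin star_weights).

Lemma u_lin_star_hub (th : vec R (star N)) : u hub th = th hub.
Proof.
rewrite /u_lin (bigD1 hub) //= star_weights_diag mul1r big1 ?addr0 // => l.
by rewrite mxE => /negPf ->; rewrite mul0r.
Qed.

Lemma u_lin_star_leaf (th : vec R (star N)) b c :
  u (leaf b c) th = th (leaf b c) + Dr^-1 * th hub.
Proof.
rewrite /u_lin (bigD1 (leaf b c)) //= star_weights_diag mul1r; congr (_ + _).
rewrite (bigD1 hub) ?hub_leaf //= mxE hub_leaf eqxx big1 ?addr0 // => l /andP[ne_l ne_hub].
by rewrite mxE (negPf ne_l) (negPf ne_hub) mul0r.
Qed.

Lemma star_lin_leaf_cut (th : vec R (star N)) : feasible u star_lin_mu th ->
  forall b c, Dr <= th hub + branch th b + N.+1%:R * th (leaf b c).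
Proof.
move=> [th0 sat] b c; have := sat (leaf b c).
rewrite /star_lin_mu leaf_hub u_lin_star_leaf -(ler_pM2r Dr_gt0) mul1r mulrDl.
rewrite mulrAC mulVf ?pnatr_eq0 // mul1r.
by have := leaf_le_branch b c th0; rewrite DrE; lra.
Qed.

Lemma star_lin_hub_satisfied (th : vec R (star N)) : inTheta th -> star_lin_mu hub <= u hub th.
Proof. by move=> th0; rewrite /star_lin_mu eqxx u_lin_star_hub. Qed.

Lemma star_lin_feasible (h l : R) : 0 <= h -> 0 <= l -> 1 <= l + Dr^-1 * h ->
  feasible u star_lin_mu (star_vec h l).
Proof.
move=> h0 l0 leaf_sat; split; first exact: inTheta_star_vec.
apply: star_ind => [|b c]; first exact: star_lin_hub_satisfied (inTheta_star_vec h0 l0).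
by rewrite /star_lin_mu leaf_hub u_lin_star_leaf star_vec_hub star_vec_leaf.
Qed.

Lemma star_lin_wb : wb_clp u star_lin_mu.
Proof.
split=> [i th th' _ |]; first by apply: u_lin_monotone => i' j; exact: star_weights_itv.
exists (star_vec 0 1); split; last first.
  by apply: u_lin_well_behaved => [|i]; [exact: star_weights_itv | rewrite star_weights_diag].
apply: star_ind => [|b c]; rewrite ?star_vec_hub ?star_vec_leaf; split=> //.
  by rewrite /star_lin_mu eqxx u_lin_star_hub /upd eqxx.
by rewrite /star_lin_mu leaf_hub u_lin_star_leaf /upd eqxx hub_leaf mulr0 addr0.
Qed.

Lemma star_lin_hub_solution : feasible u star_lin_mu (star_vec Dr 0).
Proof. by apply: star_lin_feasible; rewrite ?ler0n // mulVf ?pnatr_eq0 ?add0r. Qed.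

Lemma star_lin_equilibrium_feasible : feasible u star_lin_mu (star_vec 0 1).
Proof. by apply: star_lin_feasible; rewrite ?mulr0 ?addr0. Qed.

Lemma star_lin_stable : stable_eq u star_lin_mu (star_vec 0 1).
Proof.
apply: star_vec0_stable_eq star_lin_equilibrium_feasible _ => b c x /andP[_ x1].
by rewrite /star_lin_mu leaf_hub u_lin_star_leaf /upd eqxx hub_leaf star_vec_hub mulr0 addr0.
Qed.

Lemma star_lin_envy_free : envy_free u star_lin_mu (star_vec 0 1).
Proof.
apply: star_vec0_envy_free star_lin_equilibrium_feasible _ => b c.
rewrite /star_lin_mu leaf_hub u_lin_star_leaf /swapv eqxx hub_leaf eqxx.
by rewrite star_vec_hub star_vec_leaf mulr1 add0r invf_lt1 ?ltr0n ?(ltr_nat R 1).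
Qed.

Lemma star_lin_PoS : PoS_at_least u star_lin_mu (4^-1 * Num.sqrt (star N)%:R).
Proof.
apply: (star_PoS star_lin_hub_satisfied star_lin_leaf_cut Dr_gt0 star_lin_hub_solution).
by exists (star_vec 0 1); exact: star_lin_stable.
Qed.

Lemma star_lin_PoF : PoF_at_least u star_lin_mu (4^-1 * Num.sqrt (star N)%:R).
Proof.
apply: (star_PoF star_lin_hub_satisfied star_lin_leaf_cut Dr_gt0 star_lin_hub_solution).
by exists (star_vec 0 1); exact: star_lin_envy_free.
Qed.

End LinearStar.

Section CoverageStar.
Variables (R : realType) (N : nat).
Local Notation D := N.+2.
Local Notation M := (N.+1%:R : R).
Local Notation Dr := (D%:R : R).
Local Notation hub := (@hub N).
Local Notation star_vec := (@star_vec N R).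

Definition star_point := ('I_D + ('I_D * 'I_D) * 'I_N.+1)%type.

Definition agent_points (a : option ('I_D * 'I_D)) : {set star_point} :=
  if a is Some (b, c) then inl b |: [set inr ((b, c), r) | r : 'I_N.+1]
  else [set inl b | b : 'I_D].

Lemma card_agent_points a : #|agent_points a| = D.
Proof.
case: a => [[b c]|] /=; last by rewrite card_imset ?card_ord //; exact: inl_inj.
rewrite cardsU1 card_imset ?card_ord => [|r r' [->] //].
by have /negPf -> : inl b \notin [set inr ((b, c), r) | r : 'I_N.+1] by apply/imsetP => -[].
Qed.

Lemma inl_agent_points a b :
  (inl b \in agent_points a) = if a is Some (b', _) then b == b' else true.
Proof.
case: a => [[b' c]|] /=; last by rewrite mem_imset //; exact: inl_inj.
by rewrite in_setU1; case: imsetP => [[]|] //; rewrite orbF.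
Qed.

Lemma inr_agent_points a bc r : (inr (bc, r) \in agent_points a) = (a == Some bc).
Proof.
case: a => [[b c]|] /=; last by apply/imsetP => -[].
rewrite in_setU1 /=; apply/imsetP/eqP => [[r' _ [-> _]] // | [<-]].
by exists r.
Qed.

Definition star_cover (j : 'I_(star N)) : {set 'I_#|{: star_point}|} :=
  [set enum_rank p | p in agent_points (enum_val j)].

Lemma card_star_cover j : #|star_cover j| = D.
Proof. by rewrite card_imset ?card_agent_points //; exact: enum_rank_inj. Qed.

Lemma mem_star_cover j p : (enum_rank p \in star_cover j) = (p \in agent_points (enum_val j)).
Proof. by rewrite mem_imset //; exact: enum_rank_inj. Qed.

Lemma prod_covering (G : 'I_(star N) -> R) p :
  \prod_(j | enum_rank p \in star_cover j) G j =
  (if p \in agent_points None then G hub else 1) *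
  \prod_(b < D) \prod_(c < D) (if p \in agent_points (Some (b, c)) then G (leaf b c) else 1).
Proof.
under eq_bigl => j do rewrite mem_star_cover.
rewrite big_mkcond big_star /hub enum_rankK; congr (_ * _).
by apply: eq_bigr => b _; apply: eq_bigr => c _; rewrite enum_rankK.
Qed.

Lemma prod_shared_point (G : 'I_(star N) -> R) b :
  \prod_(j | enum_rank (inl b) \in star_cover j) G j = G hub * \prod_(c < D) G (leaf b c).
Proof.
rewrite prod_covering inl_agent_points; congr (_ * _).
under eq_bigr => b' _ do under eq_bigr => c _ do rewrite inl_agent_points.
rewrite (bigD1 b) //= eqxx [X in _ * X]big1 ?mulr1 // => b' ne_b'b.
by apply: big1 => c _; rewrite eq_sym (negPf ne_b'b).
Qed.

Lemma prod_private_point (G : 'I_(star N) -> R) bc r :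
  \prod_(j | enum_rank (inr (bc, r)) \in star_cover j) G j = G (leaf bc.1 bc.2).
Proof.
rewrite prod_covering inr_agent_points mul1r.
under eq_bigr => b _ do under eq_bigr => c _ do rewrite inr_agent_points.
by rewrite pair_big -big_mkcond (big_pred1 bc).
Qed.

Local Notation q := (unif_dist R star_cover).
Local Notation u := (u_cov q).

(* A definition, so that [lra] sees [cov_psi t] as an atom: it cannot handle the
   inverse of [N.+2%:R], which is abstracted before calling [lra] elsewhere. *)
Definition cov_psi (t : R) : R := pow_mean (1 - Dr^-1) t.

Definition leaf_uncovered (th : vec R (star N)) b c : R :=
  cov_psi (th hub) * \prod_(c' < D) cov_psi (th (leaf b c')) + M * cov_psi (th (leaf b c)).

Lemma u_cov_star_leaf (th : vec R (star N)) b c :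
  u (leaf b c) th = 1 - 2^-1 * (Dr^-1 * leaf_uncovered th b c).
Proof.
rewrite (u_cov_unif card_star_cover) big_imset /=; last by move=> ? ? _ _; exact: enum_rank_inj.
rewrite /leaf enum_rankK /= big_setU1 /=; last by apply/imsetP => -[].
rewrite big_imset /=; last by move=> r r' _ _ [].
rewrite prod_shared_point; under eq_bigr => r _ do rewrite prod_private_point.
by rewrite sumr_const card_ord -(mulr_natl _ N.+1).
Qed.

Let Dr_gt0 : 0 < Dr. Proof. by rewrite ltr0n. Qed.
Let DrE : Dr = M + 1. Proof. by rewrite natr1. Qed.
Let M_ge1 : 1 <= M. Proof. by rewrite ler1n. Qed.

Let one_sub_invDr_itv : 0 <= 1 - Dr^-1 <= 1.
Proof.
by rewrite subr_ge0 invf_le1 ?ler1n ?ltr0n // gerBl invr_ge0 ler0n.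
Qed.

Lemma cov_psi_small t : 0 <= t < 1 -> cov_psi t = 1 - t / Dr.
Proof. by move=> t01; rewrite /cov_psi pow_mean_small // subKr mulrC. Qed.

Lemma cov_psi0 : cov_psi 0 = 1.
Proof. by rewrite cov_psi_small ?lexx ?ltr01 // mul0r subr0. Qed.

Lemma cov_psi_ge t : 0 <= t -> 1 - t / Dr <= cov_psi t.
Proof. by move=> t0; have := pow_mean_ge one_sub_invDr_itv t0; rewrite subKr mulrC. Qed.

Lemma cov_psi_itv t : 0 <= t -> 0 <= cov_psi t <= 1.
Proof. by move=> t0; rewrite /cov_psi pow_mean_ge0 ?pow_mean_le1. Qed.

Lemma leaf_uncovered_ge (th : vec R (star N)) b c : inTheta th ->
  Dr - (th hub + branch th b + M * th (leaf b c)) / Dr <= leaf_uncovered th b c.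
Proof.
move=> th0; rewrite /leaf_uncovered /branch.
set S := \sum_(c' < D) (1 - cov_psi (th (leaf b c'))).
have shared : cov_psi (th hub) - S <= cov_psi (th hub) * \prod_(c' < D) cov_psi (th (leaf b c')).
  have := one_sub_sum_le_prod (index_enum 'I_D) (fun c' => cov_psi_itv (th0 (leaf b c'))).
  have : 0 <= S by apply: sumr_ge0 => c' _; case/andP: (cov_psi_itv (th0 (leaf b c'))); lra.
  have /andP[] := cov_psi_itv (th0 hub).
  move: (cov_psi (th hub)) (\prod_(c' < D) _) => p P p0 p1 S0 P_ge.
  have : 0 <= p * (P - (1 - S)) by rewrite mulr_ge0 // subr_ge0.
  have : 0 <= (1 - p) * S by rewrite mulr_ge0 // subr_ge0.
  nra.
have S_le : S <= (\sum_(c' < D) th (leaf b c')) / Dr.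
  rewrite mulr_suml; apply: ler_sum => c' _.
  by have := cov_psi_ge (th0 (leaf b c')); set z := Dr^-1; lra.
have hub_ge := cov_psi_ge (th0 hub).
have leaf_ge : M * (1 - th (leaf b c) / Dr) <= M * cov_psi (th (leaf b c)).
  by rewrite ler_wpM2l ?ler0n ?cov_psi_ge.
have -> : Dr - (th hub + \sum_(c' < D) th (leaf b c') + M * th (leaf b c)) / Dr =
    1 - th hub / Dr - (\sum_(c' < D) th (leaf b c')) / Dr + M * (1 - th (leaf b c) / Dr).
  by rewrite {1}DrE; ring.
set z := Dr^-1 in shared S_le hub_ge leaf_ge *; lra.
Qed.

Definition cov_t : R := (2 * Dr)^-1.
Definition cov_bound : R := cov_psi cov_t ^+ D + M * cov_psi cov_t.

Lemma cov_t_itv : 0 < cov_t < 1.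
Proof.
rewrite invr_gt0 mulr_gt0 ?ltr0n //= invf_lt1 ?mulr_gt0 ?ltr0n //.
by rewrite -natrM ltr1n.
Qed.

Lemma cov_gap : 0 < Dr - cov_bound /\ Dr * (Dr - cov_bound) < 1.
Proof.
have /andP[t0 t1] := cov_t_itv.
have y_eq : cov_psi cov_t = 1 - cov_t / Dr by rewrite cov_psi_small // ltW.
have Dr_e : Dr * (cov_t / Dr) = cov_t by rewrite mulrCA mulfV ?mulr1 ?pnatr_eq0.
have two_Dr_t : 2 * Dr * cov_t = 1 by rewrite mulfV // mulf_neq0 ?pnatr_eq0.
have e_gt0 : 0 < cov_t / Dr by rewrite divr_gt0.
have e_le1 : cov_t / Dr <= 1.
  by rewrite ler_pdivrMr // mul1r; apply: le_trans (ltW t1) _; rewrite ler1n.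
rewrite /cov_bound y_eq; move: Dr_e e_gt0 e_le1; set e := cov_t / Dr => Dr_e e_gt0 e_le1.
have yD_le : (1 - e) ^+ D <= 1 - e.
  by rewrite exprS ler_piMr ?exprn_ile1 //; lra.
have yD_ge := @bernoulli_ineq _ e D e_le1.
have gap_le : Dr - ((1 - e) ^+ D + M * (1 - e)) <= (Dr + M) * e by rewrite DrE; lra.
split; first by rewrite DrE; lra.
have := ler_wpM2l (ltW Dr_gt0) gap_le; rewrite mulrCA Dr_e.
by move: two_Dr_t; rewrite DrE; lra.
Qed.

(* [cov_bound] is [leaf_uncovered] at [star_vec 0 cov_t], so that profile meets
   every leaf threshold exactly. *)
Definition star_cov_mu (i : 'I_(star N)) : R :=
  if i == hub then 0 else 1 - 2^-1 * (Dr^-1 * cov_bound).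

Lemma star_cov_leaf_sat (th : vec R (star N)) b c :
  (star_cov_mu (leaf b c) <= u (leaf b c) th) = (leaf_uncovered th b c <= cov_bound).
Proof.
rewrite /star_cov_mu leaf_hub u_cov_star_leaf lerD2l lerN2.
by rewrite ler_pM2l ?invr_gt0 // ler_pM2l ?invr_gt0.
Qed.

Let q_itv := unif_dist_itv R card_star_cover (isT : (1 < D)%N).
Let q_sum1 := unif_dist_sum1 R card_star_cover (isT : (0 < D)%N).

Lemma star_cov_hub_satisfied (th : vec R (star N)) : inTheta th -> star_cov_mu hub <= u hub th.
Proof.
move=> th0; rewrite /star_cov_mu eqxx; apply: le_trans (u_cov_ge_half q_itv q_sum1 _ th0).
by rewrite invr_ge0 ler0n.
Qed.

Lemma star_cov_leaf_cut (th : vec R (star N)) : feasible u star_cov_mu th ->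
  forall b c, Dr * (Dr - cov_bound) <= th hub + branch th b + M * th (leaf b c).
Proof.
move=> [th0 sat] b c; have := sat (leaf b c); rewrite star_cov_leaf_sat => le_bound.
have le_ub := le_trans (leaf_uncovered_ge b c th0) le_bound.
rewrite mulrC -ler_pdivlMr //; move: le_ub; move: (_ / Dr) => y; lra.
Qed.

Lemma leaf_uncovered_star_vec h l b c :
  leaf_uncovered (star_vec h l) b c = cov_psi h * cov_psi l ^+ D + M * cov_psi l.
Proof.
rewrite /leaf_uncovered star_vec_hub star_vec_leaf; congr (_ * _ + _).
by under eq_bigr => c' _ do rewrite star_vec_leaf; rewrite prodr_const card_ord.
Qed.

Lemma star_cov_feasible h l : 0 <= h -> 0 <= l ->
  cov_psi h * cov_psi l ^+ D + M * cov_psi l <= cov_bound -> feasible u star_cov_mu (star_vec h l).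
Proof.
move=> h0 l0 bound; split; first exact: inTheta_star_vec.
apply: star_ind => [|b c]; first exact: star_cov_hub_satisfied (inTheta_star_vec h0 l0).
by rewrite star_cov_leaf_sat leaf_uncovered_star_vec.
Qed.

Lemma star_cov_hub_solution : feasible u star_cov_mu (star_vec (Dr * (Dr - cov_bound)) 0).
Proof.
have [gap_gt0 gap_lt1] := cov_gap; have L0 : 0 <= Dr * (Dr - cov_bound) by rewrite ltW ?mulr_gt0.
apply: star_cov_feasible; rewrite ?lexx // cov_psi0 expr1n !mulr1 cov_psi_small ?L0 //.
by rewrite mulrAC mulfV ?pnatr_eq0 // mul1r DrE; lra.
Qed.

Lemma star_cov_equilibrium_feasible : feasible u star_cov_mu (star_vec 0 cov_t).
Proof.
have /andP[t0 _] := cov_t_itv.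
by apply: star_cov_feasible; rewrite ?lexx ?(ltW t0) // cov_psi0 mul1r.
Qed.

Lemma leaf_uncovered_upd (th : vec R (star N)) b c x :
  leaf_uncovered (upd th (leaf b c) x) b c =
  cov_psi (th hub) * \prod_(c' < D) cov_psi (if c' == c then x else th (leaf b c')) + M * cov_psi x.
Proof.
rewrite /leaf_uncovered {1 3}/upd hub_leaf eqxx; congr (_ * _ + _).
by apply: eq_bigr => c' _; rewrite /upd leaf_eq eqxx.
Qed.

Lemma leaf_uncovered_swapv (th : vec R (star N)) b c :
  leaf_uncovered (swapv th (leaf b c) hub) b c =
  cov_psi (th (leaf b c)) * \prod_(c' < D) cov_psi (if c' == c then th hub else th (leaf b c')) +
  M * cov_psi (th hub).
Proof.
rewrite /leaf_uncovered {1 3}/swapv hub_leaf !eqxx; congr (_ * _ + _).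
by apply: eq_bigr => c' _; rewrite /swapv leaf_eq eqxx leaf_hub; case: ifP.
Qed.

Lemma star_cov_stable : stable_eq u star_cov_mu (star_vec 0 cov_t).
Proof.
apply: star_vec0_stable_eq star_cov_equilibrium_feasible _ => b c x /andP[x0 x_lt].
have /andP[t0 t1] := cov_t_itv.
have psi_x : cov_psi cov_t < cov_psi x.
  rewrite !cov_psi_small ?x0 ?(ltW t0) ?(lt_trans x_lt) //.
  by rewrite ltrD2l ltrN2 ltr_pM2r ?invr_gt0.
have y0 : 0 <= cov_psi cov_t by case/andP: (cov_psi_itv (ltW t0)).
have prod_ge : cov_psi cov_t ^+ D <=
    \prod_(c' < D) cov_psi (if c' == c then x else star_vec 0 cov_t (leaf b c')).
  by apply: exprn_le_prod => // c'; case: ifP => _; rewrite ?star_vec_leaf // ltW.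
rewrite ltNge star_cov_leaf_sat -ltNge leaf_uncovered_upd star_vec_hub cov_psi0 mul1r.
have : M * cov_psi cov_t < M * cov_psi x by rewrite ltr_pM2l ?ltr0n.
rewrite /cov_bound; lra.
Qed.

Lemma star_cov_envy_free : envy_free u star_cov_mu (star_vec 0 cov_t).
Proof.
apply: star_vec0_envy_free star_cov_equilibrium_feasible _ => b c.
have /andP[t0 t1] := cov_t_itv.
have /andP[y0 y1] := cov_psi_itv (ltW t0).
have y_lt1 : cov_psi cov_t < 1.
  by rewrite cov_psi_small ?(ltW t0) // gtrBl mulr_gt0 ?invr_gt0.
have prod_ge : cov_psi cov_t ^+ D <=
    \prod_(c' < D) cov_psi (if c' == c then 0 else star_vec 0 cov_t (leaf b c')).
  by apply: exprn_le_prod => // c'; case: ifP => _; rewrite ?star_vec_leaf ?cov_psi0.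
have yD_le : cov_psi cov_t ^+ D <= cov_psi cov_t by rewrite exprS ler_piMr ?exprn_ile1.
rewrite ltNge star_cov_leaf_sat -ltNge leaf_uncovered_swapv.
rewrite star_vec_hub star_vec_leaf cov_psi0 mulr1.
have := ler_wpM2l y0 prod_ge; rewrite /cov_bound.
have : 0 < (1 - cov_psi cov_t) * (M - cov_psi cov_t ^+ D).
  by rewrite mulr_gt0 // subr_gt0 //; apply: le_lt_trans yD_le (lt_le_trans y_lt1 M_ge1).
lra.
Qed.

Lemma star_cov_wb : wb_clp u star_cov_mu.
Proof.
have [gap_gt0 gap_lt1] := cov_gap; have gap_ge0 := ltW gap_gt0.
have gap_lt1' : Dr - cov_bound < 1.
  by apply: le_lt_trans gap_lt1; rewrite ler_peMl // ler1n.
split=> [i th th' th0 |]; first by apply: u_cov_monotone => // j x; exact: q_itv.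
exists (star_vec 0 (Dr - cov_bound)); split; last first.
  apply: u_cov_well_behaved; [exact: q_itv | exact: q_sum1 |].
  by apply: star_ind => [|b c]; rewrite ?star_vec_hub ?star_vec_leaf ?lexx ?ltr01 ?gap_ge0.
apply: star_ind => [|b c]; rewrite ?star_vec_hub ?star_vec_leaf; split; rewrite ?lexx //.
  by apply: star_cov_hub_satisfied; apply: inTheta_upd.
rewrite star_cov_leaf_sat leaf_uncovered_upd cov_psi0 mul1r (bigD1 c) //= eqxx.
rewrite big1 => [|c' /negPf ->]; last exact: cov_psi0.
rewrite mulr1 cov_psi_small ?gap_ge0 ?gap_lt1' //.
have -> : (1 - (Dr - cov_bound) / Dr) + M * (1 - (Dr - cov_bound) / Dr) =
          Dr - Dr * ((Dr - cov_bound) / Dr) by rewrite {1 3}DrE; ring.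
by rewrite mulrCA mulfV ?pnatr_eq0 // mulr1 subKr.
Qed.

Lemma star_cov_PoS : PoS_at_least u star_cov_mu (4^-1 * Num.sqrt (star N)%:R).
Proof.
have [gap_gt0 _] := cov_gap.
apply: (star_PoS star_cov_hub_satisfied star_cov_leaf_cut _ star_cov_hub_solution).
  exact: mulr_gt0.
by exists (star_vec 0 cov_t); exact: star_cov_stable.
Qed.

Lemma star_cov_PoF : PoF_at_least u star_cov_mu (4^-1 * Num.sqrt (star N)%:R).
Proof.
have [gap_gt0 _] := cov_gap.
apply: (star_PoF star_cov_hub_satisfied star_cov_leaf_cut _ star_cov_hub_solution).
  exact: mulr_gt0.
by exists (star_vec 0 cov_t); exact: star_cov_envy_free.
Qed.

End CoverageStar.

Theorem theorem4 (R : realType) :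
  exists c : R, 0 < c /\
  (* (a) random coverage, uniform distributions over equal-size subsets *)
  (forall N : nat, exists k : nat, (N <= k)%N /\
     exists (n s : nat) (A : 'I_k -> {set 'I_n}) (mu : 'I_k -> R),
       (0 < s)%N /\ (forall i, #|A i| = s) /\
       wb_clp (u_cov (unif_dist R A)) mu /\
       PoS_at_least (u_cov (unif_dist R A)) mu (c * Num.sqrt (k%:R)) /\
       PoF_at_least (u_cov (unif_dist R A)) mu (c * Num.sqrt (k%:R))) /\
  (* (b) linear utilities u = W theta, W_ii = 1, W_ij = O(1/sqrt k) *)
  (exists C : R, 0 < C /\
   forall N : nat, exists k : nat, (N <= k)%N /\
     exists (W : 'M[R]_k) (mu : 'I_k -> R),
       (forall i j, 0 <= W i j <= 1) /\ (forall i, W i i = 1) /\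
       (forall i j, i != j -> W i j <= C / Num.sqrt (k%:R)) /\
       wb_clp (u_lin W) mu /\
       PoS_at_least (u_lin W) mu (c * Num.sqrt (k%:R)) /\
       PoF_at_least (u_lin W) mu (c * Num.sqrt (k%:R))).
Proof.
have star_ge N : (N <= star N)%N by rewrite star_card; lia.
exists 4^-1; split; first by rewrite invr_gt0.
split=> [N | ].
  exists (star N); split; first exact: star_ge.
  exists #|{: star_point N}|, N.+2, (@star_cover N), (@star_cov_mu R N).
  split=> //; split; first exact: card_star_cover.
  by split; [exact: star_cov_wb | split; [exact: star_cov_PoS | exact: star_cov_PoF]].
exists 2; split=> // N; exists (star N); split; first exact: star_ge.
exists (star_weights R N), (@star_lin_mu R N).
split; first exact: star_weights_itv.
split; first exact: star_weights_diag.
split; first exact: star_weights_offdiag_sqrt.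
by split; [exact: star_lin_wb | split; [exact: star_lin_PoS | exact: star_lin_PoF]].
Qed.
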